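(* For every integer $N\ge 0$, let $T(N)$ be the number of tilings of a $3\times 4\times n$ box, $n=N/3$, by $N$ bricks of size $1\times 2\times 2$ (and $0$ if $3\nmid N$). Then, as formal power series, \[ \sum_{N\ge 0} T(N)\,z^N=\frac{(1-2z^6)(1-24z^6+122z^{12}-120z^{18})}{(1-z^6)(1-54z^6+646z^{12}-2540z^{18}+2640z^{24})}. \]
   Context: A tiling of a $k\times m\times n$ box (made of $kmn$ unit cubes) by $a\times b\times c$ bricks is a partition of the box into non-overlapping axis-parallel boxes with integer corner coordinates, each congruent (by an axis-permuting placement) to the $a\times b\times c$ brick; all orientations are allowed. Tilings related by symmetries of the box are counted as distinct. The empty tiling counts once for $N=0$. *)

From mathcomp Require Import all_boot all_order all_algebra.
Unset Printing Implicit Defensive.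
Import GRing.Theory Num.Theory.

(* Unit cubes of a k x m x n box: cube (i,j,l) is [i,i+1]x[j,j+1]x[l,l+1]. *)
Definition cell (k m n : nat) : Type := ('I_k * 'I_m * 'I_n)%type.

Definition box_at (k m n x y z p q r : nat) : {set cell k m n} :=
  [set v : cell k m n | [&& x <= v.1.1 < x + p, y <= v.1.2 < y + q
                          & z <= v.2 < z + r]].

Definition is_brick (k m n a b c : nat) (S : {set cell k m n}) : bool :=
  has (fun d : nat * nat * nat =>
         [exists x : 'I_k.+1, exists y : 'I_m.+1, exists z : 'I_n.+1,
            [&& x + d.1.1 <= k, y + d.1.2 <= m, z + d.2 <= n
              & S == box_at k m n x y z d.1.1 d.1.2 d.2]])
      [:: (a, b, c); (a, c, b); (b, a, c); (b, c, a); (c, a, b); (c, b, a)].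

Definition is_tiling (k m n a b c : nat) (P : {set {set cell k m n}}) : bool :=
  partition P [set: cell k m n] && [forall S in P, is_brick k m n a b c S].

Definition num_tilings (k m n a b c : nat) : nat :=
  #|[set P : {set {set cell k m n}} | is_tiling k m n a b c P]|.

Definition T (N : nat) : nat :=
  if 3 %| N then num_tilings 3 4 (N %/ 3) 1 2 2 else 0.

Local Open Scope ring_scope.

Definition numer17 : {poly int} :=
  (1 - 2%:P * 'X^6) * (1 - 24%:P * 'X^6 + 122%:P * 'X^12 - 120%:P * 'X^18).

Definition denom17 : {poly int} :=
  (1 - 'X^6) *
  (1 - 54%:P * 'X^6 + 646%:P * 'X^12 - 2540%:P * 'X^18 + 2640%:P * 'X^24).

From Stdlib Require Import ZArith.
From mathcomp Require Import all_boot all_order all_algebra.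
From mathcomp Require Import zify ssrZ ring.
Import GRing.Theory Num.Theory.

(* Cut the 3 x 4 x n box into its n layers.  A 1 x 2 x 2 brick either lies
   flat in one layer or stands upright across two consecutive ones, so the
   box can be tiled layer by layer, always covering the first free square of
   the current layer.  The number G k t of tilings of k layers whose lowest
   layer is already partly covered (profile t) by upright bricks from below
   then obeys a transfer recursion over the ways of completing one layer, and
   only 26 profiles ever occur.  The recurrence encoded by the denominator,
   G (k+10) - 55 G (k+8) + 700 G (k+6) - 3186 G (k+4) + 5180 G (k+2)
   - 2640 G k = 0, is linear in G, hence inherited through the transfer
   recursion once it holds at k = 1 for all 26 profiles.  That, together with
   the coefficients of z^0, ..., z^32, is a finite computation. *)

(** * Tilings of a finite set *)

Section Tilings.

Context {T : finType} (tile : pred {set T}).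

Definition tilings (D : {set T}) : {set {set {set T}}} :=
  [set P | partition P D && [forall S in P, tile S]].

Lemma card_tilings0 : #|tilings set0| = 1.
Proof.
rewrite -(cards1 (set0 : {set {set T}})); apply: eq_card => P.
rewrite !inE partition_set0; case: eqP => [->|] //=.
by apply/forall_inP => S; rewrite inE.
Qed.

Lemma tilings_pblock (D : {set T}) x B : tile B -> x \in B -> B \subset D ->
  [set P in tilings D | pblock P x == B] = [set B |: Q | Q in tilings (D :\: B)].
Proof.
move=> tB xB BD; apply/setP => P; rewrite !inE; apply/andP/imsetP.
- case=> /andP[pP /forall_inP tP] /eqP pxB.
  have BP : B \in P by rewrite -pxB pblock_mem // (cover_partition pP) (subsetP BD).
  exists (P :\ B); last by rewrite setD1K.
  rewrite inE (partitionD1 pP BP); apply/forall_inP => S.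
  by rewrite inE => /andP[_ /tP].
- case=> Q; rewrite inE => /andP[pQ /forall_inP tQ] ->.
  have B0 : B != set0 by apply/set0Pn; exists x.
  have dBD : [disjoint B & D :\: B] by rewrite disjoints_subset setCD subsetUr.
  have pBQ := partitionU1 pQ B0 dBD.
  rewrite setDE setUIr setUCr setIT (setUidPr BD) in pBQ.
  rewrite pBQ; split.
    by apply/forall_inP => S; rewrite !inE => /orP[/eqP->|/tQ].
  by rewrite (def_pblock (partition_trivIset pBQ) (setU11 B Q) xB).
Qed.

Lemma card_tilings_pblock (D : {set T}) x : x \in D ->
  #|tilings D| = \sum_(B | tile B && (x \in B) && (B \subset D)) #|tilings (D :\: B)|.
Proof.
move=> xD; rewrite -sum1_card (partition_big (pblock^~ x)
   (fun B => tile B && (x \in B) && (B \subset D))) /=; last first.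
  move=> P; rewrite inE => /andP[pP /forall_inP tP].
  have xP : x \in cover P by rewrite (cover_partition pP).
  by rewrite tP ?pblock_mem //= mem_pblock xP (partitionS pP (pblock_mem xP)).
apply: eq_bigr => B /andP[/andP[tB xB] BD].
rewrite sum1_card -cardsE tilings_pblock // card_in_imset // => Q1 Q2.
have BnQ Q : Q \in tilings (D :\: B) -> B \notin Q.
  rewrite inE => /andP[pQ _]; apply/negP => BQ.
  by have /subsetP/(_ x xB) := partitionS pQ BQ; rewrite inE xB.
by move=> /BnQ nB1 /BnQ nB2 eqQ; rewrite -(setU1K nB1) eqQ setU1K.
Qed.

End Tilings.

(** * Layer profiles and brick placements *)

(* The squares of a 3 x 4 layer already covered; square (i, j) is entry 4 i + j. *)
Definition profile := seq bool.

Definition covered (p : profile) k := nth false p k.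
Definition pempty : profile := nseq 12 false.
Definition pjoin (p q : profile) : profile :=
  [seq covered p k || covered q k | k <- iota 0 12].
Definition pdisjoint (p q : profile) :=
  all (fun k => ~~ (covered p k && covered q k)) (iota 0 12).
Definition pfull (p : profile) := all (covered p) (iota 0 12).
Definition first_free (p : profile) := find (predC (covered p)) (iota 0 12).
Definition free_cells (p : profile) := [set k : 'I_12 | ~~ covered p k].

Lemma covered_pempty k : covered pempty k = false.
Proof. by rewrite /covered nth_nseq if_same. Qed.

Lemma covered_pjoin p q k : k < 12 -> covered (pjoin p q) k = covered p k || covered q k.
Proof. by move=> k12; rewrite /covered (nth_map 0) ?size_iota // nth_iota. Qed.

Lemma pfullP p k : pfull p -> k < 12 -> covered p k.
Proof. by move=> /allP pP k12; apply: pP; rewrite mem_iota. Qed.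

Lemma pdisjointP p q k : pdisjoint p q -> k < 12 -> ~~ (covered p k && covered q k).
Proof. by move=> /allP pq k12; apply: pq; rewrite mem_iota. Qed.

Arguments pfullP {p k}.
Arguments pdisjointP {p q k}.

Lemma first_free_lt p : ~~ pfull p -> first_free p < 12.
Proof. by rewrite -has_predC has_find size_iota. Qed.

Lemma first_free_uncovered p : ~~ pfull p -> ~~ covered p (first_free p).
Proof.
move=> np; have := np; rewrite -has_predC => /(nth_find 0).
by rewrite nth_iota ?first_free_lt.
Qed.

Lemma free_cells_pjoin p q : ~~ pfull p -> covered q (first_free p) ->
  free_cells (pjoin p q) \proper free_cells p.
Proof.
move=> np qp; apply/properP; split.
  by apply/subsetP => k; rewrite !inE covered_pjoin //; apply: contra => ->.
exists (Ordinal (first_free_lt _ np)).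
  by rewrite inE first_free_uncovered.
by rewrite inE negbK covered_pjoin ?first_free_lt // qp orbT.
Qed.

(* ((x, y), (dx, dy, dz)): a brick with corner square (x, y) of the current
   layer, dz = 2 meaning that it also occupies the next layer. *)
Definition placement := (nat * nat * (nat * nat * nat))%type.

Definition brick_dims : seq (nat * nat * nat) := [:: (2, 2, 1); (1, 2, 2); (2, 1, 2)].

Definition inside (p : placement) := (p.1.1 + p.2.1.1 <= 3) && (p.1.2 + p.2.1.2 <= 4).

Definition placements : seq placement :=
  [seq p <- [seq (xy, d) | xy <- [seq (x, y) | x <- iota 0 3, y <- iota 0 4],
                           d <- brick_dims] | inside p].

Definition footprint (p : placement) : profile :=
  [seq (p.1.1 <= k %/ 4 < p.1.1 + p.2.1.1) && (p.1.2 <= k %% 4 < p.1.2 + p.2.1.2)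
  | k <- iota 0 12].

Definition upright (p : placement) := p.2.2 == 2.

Definition next_layer (s' : profile) (p : placement) :=
  if upright p then pjoin s' (footprint p) else s'.

Definition fits (up : bool) (s s' : profile) (p : placement) :=
  [&& covered (footprint p) (first_free s), pdisjoint (footprint p) s
    & upright p ==> up && pdisjoint (footprint p) s'].

(* The ways of filling the current layer (covered by s) with bricks, each
   covering the then first free square, listed by the resulting profile of the
   next layer (initially s'); [up] allows upright bricks.  Every brick covers a
   new square, so fuel 12 suffices. *)
Fixpoint completions (fuel : nat) (up : bool) (s s' : profile) : seq profile :=
  if pfull s then [:: s'] else
  if fuel is f.+1 then
    flatten [seq completions f up (pjoin s (footprint p)) (next_layer s' p)
            | p <- placements & fits up s s' p]
  else [::].

Lemma mem_placements x y d : d \in brick_dims -> inside (x, y, d) ->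
  (x, y, d) \in placements.
Proof.
move=> dB xyd; rewrite mem_filter xyd andTb.
have [x3 y4] : x < 3 /\ y < 4.
  by move: dB xyd; rewrite !inE => /or3P[]/eqP-> /andP[/= ? ?]; lia.
apply/flatten_mapP; exists (x, y); last exact: (map_f (pair (x, y)) dB).
by apply/flatten_mapP; exists x; rewrite ?mem_iota //; apply: map_f; rewrite mem_iota.
Qed.

Lemma covered_footprint p k : k < 12 -> covered (footprint p) k =
  (p.1.1 <= k %/ 4 < p.1.1 + p.2.1.1) && (p.1.2 <= k %% 4 < p.1.2 + p.2.1.2).
Proof. by move=> k12; rewrite /covered (nth_map 0) ?size_iota // nth_iota. Qed.

Lemma footprint_inj : {in placements &, injective footprint}.
Proof.
have /allP footP : all (fun p => all (fun q => (footprint p == footprint q) ==> (p == q))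
  placements) placements by vm_compute.
by move=> p q /footP/allP/(_ q) pq qP /eqP/(implyP (pq qP))/eqP.
Qed.

Lemma completions_full fuel up s s' : pfull s -> completions fuel up s s' = [:: s'].
Proof. by move=> fs; case: fuel => [|fuel]; cbn [completions]; rewrite fs. Qed.

Lemma completionsS fuel up s s' : ~~ pfull s ->
  completions fuel.+1 up s s' =
  flatten [seq completions fuel up (pjoin s (footprint p)) (next_layer s' p)
          | p <- placements & fits up s s' p].
Proof. by move=> /negbTE nf; cbn [completions]; rewrite nf. Qed.

(** * Cutting the box layer by layer *)

Definition idx {n} (v : cell 3 4 n) : nat := 4 * v.1.1 + v.1.2.

Lemma idx_lt {n} (v : cell 3 4 n) : idx v < 12.
Proof. by rewrite /idx; have := ltn_ord v.1.1; have := ltn_ord v.1.2; lia. Qed.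

Lemma idx_div {n} (v : cell 3 4 n) : idx v %/ 4 = v.1.1.
Proof. by rewrite /idx; have := ltn_ord v.1.2; lia. Qed.

Lemma idx_mod {n} (v : cell 3 4 n) : idx v %% 4 = v.1.2.
Proof. by rewrite /idx; have := ltn_ord v.1.2; lia. Qed.

Definition cell_at {n l} k (hl : l < n) : cell 3 4 n :=
  (inord (k %/ 4), inord (k %% 4), Ordinal hl).

Lemma idx_cell_at n l k (hl : l < n) : k < 12 -> idx (cell_at k hl) = k.
Proof. by move=> k12; rewrite /idx /= !inordK; lia. Qed.

Definition region n l (s s' : profile) : {set cell 3 4 n} :=
  [set v : cell 3 4 n | [|| (v.2 == l :> nat) && ~~ covered s (idx v),
              (v.2 == l.+1 :> nat) && ~~ covered s' (idx v) | l.+1 < v.2]].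

Definition brick_at n l (p : placement) : {set cell 3 4 n} :=
  box_at 3 4 n p.1.1 p.1.2 l p.2.1.1 p.2.1.2 p.2.2.

Lemma in_brick_at n l (p : placement) (v : cell 3 4 n) :
  (v \in brick_at n l p) = covered (footprint p) (idx v) && (l <= v.2 < l + p.2.2).
Proof. by rewrite inE covered_footprint ?idx_lt // idx_div idx_mod andbA. Qed.

Lemma region_empty n l s s' : n <= l -> region n l s s' = set0.
Proof.
move=> nl; apply/setP => v; rewrite !inE; have := ltn_ord v.2.
by case: (covered s _); case: (covered s' _) => /=; lia.
Qed.

Lemma region_full n l s s' : pfull s -> region n l s s' = region n l.+1 s' pempty.
Proof.
move=> fs; apply/setP => v; rewrite !inE covered_pempty (pfullP fs (idx_lt v)) /=.
by case: (covered s' _) => /=; apply/idP/idP; lia.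
Qed.

Lemma region_bottom n : region n 0 pempty pempty = setT.
Proof. by apply/setP => v; rewrite !inE !covered_pempty /=; lia. Qed.

Lemma region_diff n l s s' (p : placement) : p.2 \in brick_dims ->
  region n l s s' :\: brick_at n l p =
  region n l (pjoin s (footprint p)) (next_layer s' p).
Proof.
move=> pB; apply/setP => v; rewrite in_setD in_brick_at !inE /next_layer /upright.
move: pB; rewrite !inE => /or3P[]/eqP-> /=; rewrite ?covered_pjoin ?idx_lt //;
  case: (covered s _); case: (covered s' _); case: (covered (footprint p) _) => /=;
  apply/idP/idP; lia.
Qed.

Lemma region_ge n l s s' (v : cell 3 4 n) : v \in region n l s s' -> l <= v.2.
Proof. by rewrite inE; lia. Qed.

Lemma placement_dims {p : placement} : p \in placements -> p.2 \in brick_dims.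
Proof. by move: p; apply/allP; vm_compute. Qed.

Lemma brick_height {d : nat * nat * nat} : d \in brick_dims -> 0 < d.2 <= 2.
Proof. by rewrite !inE => /or3P[]/eqP->. Qed.

Lemma brick_at_cell n l (p : placement) k (hl : l < n) : p.2 \in brick_dims -> k < 12 ->
  (cell_at k hl \in brick_at n l p) = covered (footprint p) k.
Proof.
move=> /brick_height dz k12; rewrite in_brick_at idx_cell_at //= leqnn.
by rewrite (_ : l < l + p.2.2) ?andbT //; lia.
Qed.

Lemma brick_at_inj {n l} (hl : l < n) : {in placements &, injective (brick_at n l)}.
Proof.
move=> p q pP qP epq; apply: footprint_inj => //.
apply: (@eq_from_nth _ false); first by rewrite !size_map.
rewrite size_map size_iota => k k12.
rewrite -[LHS]/(covered _ k) -[RHS]/(covered _ k).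
by rewrite -!(brick_at_cell n l _ k hl) ?placement_dims ?epq.
Qed.

Lemma is_brick_brick_at n l (p : placement) : p \in placements -> l + p.2.2 <= n ->
  is_brick 3 4 n 1 2 2 (brick_at n l p).
Proof.
move=> pP ln; apply/hasP; exists p.2.
  by move: (placement_dims pP); rewrite !inE => /or3P[]/eqP->; rewrite eqxx ?orbT.
move: pP; rewrite mem_filter => /andP[/andP[px py] _].
apply/existsP; exists (inord p.1.1); apply/existsP; exists (inord p.1.2).
apply/existsP; exists (inord l).
by rewrite !inordK ?px ?py ?ln ?eqxx //; lia.
Qed.

Lemma fits_height {n l s s'} {p : placement} : p.2 \in brick_dims -> l < n ->
  fits (l.+1 < n) s s' p -> l + p.2.2 <= n.
Proof.
move=> /brick_height dz ln /and3P[_ _]; rewrite /upright.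
by case: eqP => [-> /andP[]|]; lia.
Qed.

Lemma fits_of_brick_at {n l s s'} {p : placement} (hl : l < n) : ~~ pfull s ->
  p.2 \in brick_dims -> l + p.2.2 <= n -> cell_at (first_free s) hl \in brick_at n l p ->
  brick_at n l p \subset region n l s s' -> fits (l.+1 < n) s s' p.
Proof.
move=> nf pB ln cB /subsetP BR; have dz := brick_height pB.
apply/and3P; split.
- by rewrite -(brick_at_cell n l p _ hl) ?first_free_lt.
- apply/allP => k; rewrite mem_iota => /= k12; apply/negP => /andP[fk sk].
  have /BR : cell_at k hl \in brick_at n l p by rewrite brick_at_cell.
  by rewrite inE idx_cell_at //= sk /=; lia.
- apply/implyP => /eqP up; have hl1 : l.+1 < n by lia.
  rewrite hl1; apply/allP => k; rewrite mem_iota => /= k12; apply/negP => /andP[fk sk].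
  have /BR : cell_at k hl1 \in brick_at n l p.
    by rewrite in_brick_at idx_cell_at //= fk up; lia.
  by rewrite inE idx_cell_at //= sk /=; case: (covered s k) => /=; lia.
Qed.

Lemma brick_at_of_fits n l s s' (p : placement) (hl : l < n) : ~~ pfull s ->
  p \in placements -> fits (l.+1 < n) s s' p ->
  [/\ is_brick 3 4 n 1 2 2 (brick_at n l p), cell_at (first_free s) hl \in brick_at n l p
    & brick_at n l p \subset region n l s s'].
Proof.
move=> nf pP fp; have pB := placement_dims pP; have ln := fits_height pB hl fp.
split; first exact: is_brick_brick_at.
  by rewrite brick_at_cell ?first_free_lt //; case/and3P: fp.
apply/subsetP => v; rewrite in_brick_at inE => /andP[fv lv].
case/and3P: fp => _ /pdisjointP/(_ (idx_lt v)) ds /implyP up.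
rewrite fv /= in ds; rewrite ds andbT.
have [->|[-> upr]] : v.2 = l :> nat \/ v.2 = l.+1 :> nat /\ upright p.
- by move: (brick_height pB) lv; rewrite /upright; case: eqP => ? /=; lia.
- by rewrite eqxx.
case/andP: (up upr) => _ /pdisjointP/(_ (idx_lt v)).
by rewrite fv /= => ->; rewrite eqxx orbT.
Qed.

Lemma brick_through_first_free {n l s s' B} (hl : l < n) :
  is_brick 3 4 n 1 2 2 B -> cell_at (first_free s) hl \in B -> B \subset region n l s s' ->
  exists p : placement, [/\ p \in placements, l + p.2.2 <= n & B = brick_at n l p].
Proof.
move=> /hasP[d dO /existsP[x /existsP[y /existsP[z /and4P[xd yd zd /eqP EB]]]]] cB BR.
have dB : d \in brick_dims by move: d dO {xd yd zd EB}; apply/allP.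
have zl : z = l :> nat.
  move: (cB); rewrite EB inE => /and3P[cx cy /andP/= [zc _]].
  have zn : z < n := leq_ltn_trans zc hl.
  have : ((cell_at (first_free s) hl).1, Ordinal zn) \in B.
    by rewrite EB inE cx cy /= leqnn; move: (brick_height dB); lia.
  by move=> /(subsetP BR)/region_ge /=; lia.
exists (x : nat, y : nat, d); rewrite -zl; split=> //.
by rewrite mem_placements // /inside xd yd.
Qed.

Lemma bricks_through_first_free n l s s' (hl : l < n) B : ~~ pfull s ->
  [&& is_brick 3 4 n 1 2 2 B, cell_at (first_free s) hl \in B & B \subset region n l s s'] =
  (B \in [seq brick_at n l p | p <- placements & fits (l.+1 < n) s s' p]).
Proof.
move=> nf; apply/and3P/mapP.
- case=> bB cB BR; have [p [pP ln EB]] := brick_through_first_free hl bB cB BR.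
  exists p => //; rewrite mem_filter pP andbT; rewrite EB in cB BR.
  exact: fits_of_brick_at hl nf (placement_dims pP) ln cB BR.
- by case=> p; rewrite mem_filter => /andP[fp pP] ->; apply: brick_at_of_fits.
Qed.

Definition ntilings {n} (D : {set cell 3 4 n}) := #|tilings (is_brick 3 4 n 1 2 2) D|.

Lemma ntilings_region_step n l s s' (hl : l < n) : ~~ pfull s ->
  ntilings (region n l s s') =
  \sum_(p <- placements | fits (l.+1 < n) s s' p)
     ntilings (region n l (pjoin s (footprint p)) (next_layer s' p)).
Proof.
move=> nf; have cR : cell_at (first_free s) hl \in region n l s s'.
  by rewrite inE idx_cell_at ?first_free_lt // first_free_uncovered // eqxx.
rewrite /ntilings (card_tilings_pblock _ _ _ cR) -big_filter.
rewrite (perm_big [seq brick_at n l p | p <- placements & fits (l.+1 < n) s s' p]).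
  rewrite big_map big_filter big_seq_cond [RHS]big_seq_cond.
  by apply: eq_bigr => p /andP[/placement_dims pB _]; rewrite region_diff.
apply: uniq_perm.
- by rewrite filter_uniq // index_enum_uniq.
- rewrite map_inj_in_uniq ?filter_uniq // => p q.
  rewrite [p \in _]mem_filter [q \in _]mem_filter => /andP[_ pP] /andP[_ qP].
  exact: (brick_at_inj hl).
- by move=> B; rewrite mem_filter mem_index_enum andbT -andbA bricks_through_first_free.
Qed.

(** * The transfer recursion *)

Local Open Scope ring_scope.

Fixpoint transfer_count (k : nat) (t : profile) : int :=
  if k is k'.+1 then
    \sum_(t' <- completions 12 (0 < k')%nat t pempty) transfer_count k' t'
  else 1.

Lemma transfer_countS k t :
  transfer_count k.+1 t =
  \sum_(t' <- completions 12 (0 < k)%nat t pempty) transfer_count k t'.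
Proof. by []. Qed.

Lemma ntilings_region_layer n l k (e : (l + k.+1)%nat = n)
    (IHk : forall t, (ntilings (region n l.+1 t pempty))%:Z = transfer_count k t)
    fuel s s' :
  (#|free_cells s| <= fuel)%nat ->
  (ntilings (region n l s s'))%:Z =
  \sum_(t <- completions fuel (0 < k)%nat s s') transfer_count k t.
Proof.
elim: fuel s s' => [|fuel IHf] s s' sf; have [fs|nf] := boolP (pfull s).
- by rewrite completions_full // region_full // IHk big_seq1.
- suff : (0 < #|free_cells s|)%nat by lia.
  by apply/card_gt0P; exists (Ordinal (first_free_lt _ nf)); rewrite inE first_free_uncovered.
- by rewrite completions_full // region_full // IHk big_seq1.
have hl : (l < n)%nat by rewrite -e; lia.
have up : (l.+1 < n)%nat = (0 < k)%nat by rewrite -e; apply/idP/idP; lia.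
rewrite ntilings_region_step // up completionsS // (big_morph Posz PoszD (erefl 0%:Z)).
rewrite big_flatten big_map big_filter; apply: eq_bigr => p fp.
apply: IHf; rewrite -ltnS (leq_trans _ sf) // proper_card //.
by apply: free_cells_pjoin => //; case/and3P: fp.
Qed.

Lemma ntilings_region n l k t :
  (l + k)%nat = n -> (ntilings (region n l t pempty))%:Z = transfer_count k t.
Proof.
elim: k l t => [|k IHk] l t e.
  by rewrite region_empty -?e ?addn0 // /ntilings card_tilings0.
apply: ntilings_region_layer => //; first by move=> t'; apply: IHk; rewrite -e addnS.
by rewrite (leq_trans (max_card _)) ?card_ord.
Qed.

Lemma T_transfer_count N :
  (T N)%:Z = if (3 %| N)%nat then transfer_count (N %/ 3) pempty else 0.
Proof.
by rewrite /T; case: ifP => // _; rewrite -(@ntilings_region (N %/ 3) 0) // region_bottom.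
Qed.

(** * The finite computation *)

Fixpoint close_profiles (fuel : nat) (S : seq profile) : seq profile :=
  if fuel is f.+1 then
    close_profiles f (undup (S ++ flatten [seq completions 12 true t pempty | t <- S]))
  else S.

(* The profiles reachable from the empty one; that the list is closed is
   checked below, so the number of closure rounds does not matter. *)
Definition profiles : seq profile := Eval vm_compute in close_profiles 3 [:: pempty].

Lemma pempty_in_profiles : pempty \in profiles.
Proof. by []. Qed.

Definition transitions (up : bool) : seq (seq nat) :=
  [seq [seq index t' profiles | t' <- completions 12 up t pempty] | t <- profiles].

(* Precomputed, so that evaluating the tables below costs no completions. *)
Definition transition_lists : bool -> seq (seq nat) :=
  Eval vm_compute in fun up => if up then transitions true else transitions false.

Lemma transition_listsE up : transition_lists up = transitions up.
Proof. by case: up; vm_compute. Qed.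

Lemma profiles_closed {up t t'} : t \in profiles ->
  t' \in completions 12 up t pempty -> t' \in profiles.
Proof.
have : all (all (gtn (size profiles))) (transition_lists up) by case: up.
rewrite transition_listsE => /allP tP tS t't; rewrite -index_mem.
have /tP/allP :=
  map_f (fun t => [seq index t' profiles | t' <- completions 12 up t pempty]) tS.
by apply; apply: map_f.
Qed.

Lemma Z_of_int_sum (I : Type) (r : seq I) (P : pred I) (F : I -> int) :
  Z_of_int (\sum_(i <- r | P i) F i) = \sum_(i <- r | P i) Z_of_int (F i).
Proof. exact: rmorph_sum. Qed.

Lemma Z_of_intM (a b : int) : Z_of_int (a * b) = Z_of_int a * Z_of_int b.
Proof. exact: rmorphM. Qed.

Lemma foldr_addE (s : seq Z) : foldr +%R 0 s = \sum_(x <- s) x.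
Proof. by elim: s => [|x s /= ->]; rewrite ?big_nil ?big_cons. Qed.

Lemma sum_ord_foldr n (P : pred nat) (F : nat -> Z) :
  \sum_(j < n | P j) F j = foldr +%R 0 [seq F j | j <- iota 0 n & P j].
Proof. by rewrite foldr_addE big_map big_filter -(big_mkord P) /index_iota subn0. Qed.

Fixpoint transfer_table (k : nat) : seq Z :=
  if k is k'.+1 then
    let v := transfer_table k' in
    [seq foldr +%R 0 [seq v`_i | i <- row] | row <- transition_lists (0 < k')%nat]
  else nseq (size profiles) 1.

Lemma transfer_tableS k :
  transfer_table k.+1 =
  [seq foldr +%R 0 [seq (transfer_table k)`_i | i <- row]
  | row <- transition_lists (0 < k)%nat].
Proof. by []. Qed.

Lemma transfer_tableE k t : t \in profiles ->
  Z_of_int (transfer_count k t) = (transfer_table k)`_(index t profiles).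
Proof.
elim: k t => [|k IHk] t tP; first by rewrite nth_nseq index_mem tP.
rewrite transfer_countS transfer_tableS Z_of_int_sum.
rewrite (nth_map [::]) ?size_map ?transition_listsE ?index_mem //.
rewrite (nth_map pempty) ?index_mem // nth_index // -map_comp foldr_addE big_map.
rewrite !big_seq; apply: eq_bigr => t' t't.
by rewrite /= -IHk // (profiles_closed tP t't).
Qed.

Definition denom_coef : seq int := [:: -2640; 5180; -3186; 700; -55; 1].

Definition numer_coef : seq int := [:: 1; -26; 170; -364; 240].

Definition denom_combo (g : nat -> int) (k : nat) : int :=
  \sum_(j < 6) denom_coef`_j * g (k + 2 * j)%nat.

Lemma denom_combo_step t k : (0 < k)%nat ->
  denom_combo (transfer_count^~ t) k.+1 =
  \sum_(t' <- completions 12 true t pempty) denom_combo (transfer_count^~ t') k.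
Proof.
move=> k0; rewrite /denom_combo exchange_big; apply: eq_bigr => j _.
by rewrite addSn transfer_countS mulr_sumr (_ : (0 < k + 2 * j)%nat) //; lia.
Qed.

Lemma denom_combo_table1 :
  all (fun i => foldr +%R 0 [seq Z_of_int denom_coef`_j * (transfer_table (1 + 2 * j))`_i
                            | j <- iota 0 6 & xpredT j] == 0)
      (iota 0 (size profiles)).
Proof. by vm_compute. Qed.

Lemma denom_combo1 t : t \in profiles -> denom_combo (transfer_count^~ t) 1 = 0.
Proof.
move=> tP; apply: (can_inj Z_of_intK); rewrite /denom_combo Z_of_int_sum.
under eq_bigr => j _ do rewrite Z_of_intM transfer_tableE //.
rewrite (sum_ord_foldr 6 xpredT
  (fun j => Z_of_int denom_coef`_j * (transfer_table (1 + 2 * j))`_(index t profiles))).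
have /allP/(_ (index t profiles)) := denom_combo_table1.
by rewrite mem_iota index_mem tP => /(_ isT)/eqP.
Qed.

Lemma denom_combo_transfer_count k t : t \in profiles -> (0 < k)%nat ->
  denom_combo (transfer_count^~ t) k = 0.
Proof.
elim: k t => [|[|k] IHk] t tP // _; first exact: denom_combo1.
rewrite denom_combo_step // big_seq big1 // => t' t't.
exact: IHk (profiles_closed tP t't) _.
Qed.

(** * The generating function *)

Lemma coef_sum_scale_Xn (R : nzRingType) n (c : nat -> R) (e : nat -> nat) i :
  (\sum_(j < n) c j *: 'X^(e j))`_i = \sum_(j < n) c j * (e j == i)%:R.
Proof. by rewrite coef_sum; apply: eq_bigr => j _; rewrite coefZ coefXn eq_sym. Qed.

Lemma sum_ord_delta (R : nzRingType) N (m : nat) (F : nat -> R) :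
  \sum_(i < N.+1) (m == i :> nat)%:R * F i = if (m <= N)%nat then F m else 0.
Proof.
case: leqP => hm.
  rewrite (bigD1 (Ordinal (hm : (m < N.+1)%nat))) //= eqxx mul1r big1 ?addr0 // => i.
  by rewrite -val_eqE eq_sym /= => /negbTE->; rewrite mul0r.
by rewrite big1 // => i _; rewrite gtn_eqF ?mul0r // (leq_trans (ltn_ord i)).
Qed.

Lemma sum_coef_mul_sparse (R : nzRingType) n (c : nat -> R) (e : nat -> nat)
    (a : nat -> R) N :
  \sum_(i < N.+1) (\sum_(j < n) c j *: 'X^(e j))`_i * a (N - i)%nat =
  \sum_(j < n | (e j <= N)%nat) c j * a (N - e j)%nat.
Proof.
under eq_bigr => i _ do rewrite coef_sum_scale_Xn mulr_suml.
rewrite exchange_big [RHS]big_mkcond; apply: eq_bigr => j _.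
under eq_bigr => i _ do rewrite -mulrA.
rewrite -mulr_sumr (sum_ord_delta _ _ _ (fun i => a (N - i)%nat)).
by case: ifP; rewrite ?mulr0.
Qed.

Lemma denom17E : denom17 = \sum_(j < 6) denom_coef`_j *: 'X^(30 - 6 * j).
Proof. by rewrite /denom17 !big_ord_recr big_ord0 /= -!mul_polyC; ring. Qed.

Lemma numer17E : numer17 = \sum_(j < 5) numer_coef`_j *: 'X^(6 * j).
Proof. by rewrite /numer17 !big_ord_recr big_ord0 /= -!mul_polyC; ring. Qed.

Definition T_table (N : nat) : Z :=
  if (3 %| N)%nat then (transfer_table (N %/ 3))`_(index pempty profiles) else 0.

Lemma Z_of_int_T N : Z_of_int (T N)%:Z = T_table N.
Proof.
rewrite T_transfer_count /T_table; case: ifP => // _.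
by rewrite transfer_tableE ?pempty_in_profiles.
Qed.

Lemma initial_coefficients_table :
  all (fun N => foldr +%R 0 [seq Z_of_int denom_coef`_j * T_table (N - (30 - 6 * j))
                            | j <- iota 0 6 & (30 - 6 * j <= N)%nat]
                == foldr +%R 0 [seq Z_of_int (numer_coef`_j * ((6 * j)%nat == N)%:R)
                               | j <- iota 0 5 & xpredT j])
      (iota 0 33).
Proof. by vm_compute. Qed.

Lemma initial_coefficients N : (N < 33)%nat ->
  \sum_(j < 6 | (30 - 6 * j <= N)%nat) denom_coef`_j * (T (N - (30 - 6 * j)))%:Z =
  \sum_(j < 5) numer_coef`_j * ((6 * j)%nat == N)%:R.
Proof.
move=> N33; apply: (can_inj Z_of_intK); rewrite !Z_of_int_sum.
under eq_bigr => j _ do rewrite Z_of_intM Z_of_int_T.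
rewrite (sum_ord_foldr 6 (fun j => 30 - 6 * j <= N)%nat
  (fun j => Z_of_int denom_coef`_j * T_table (N - (30 - 6 * j)))).
rewrite (sum_ord_foldr 5 xpredT
  (fun j => Z_of_int (numer_coef`_j * ((6 * j)%nat == N)%:R))).
by have /allP/(_ N) := initial_coefficients_table; rewrite mem_iota => /(_ N33)/eqP.
Qed.

Lemma later_coefficients N : (33 <= N)%nat ->
  \sum_(j < 6 | (30 - 6 * j <= N)%nat) denom_coef`_j * (T (N - (30 - 6 * j)))%:Z = 0.
Proof.
move=> N33; rewrite (eq_bigl xpredT) => [|j]; last by apply/idP; lia.
have [dN|dN] := boolP (3 %| N)%nat; last first.
  apply: big1 => j _; rewrite T_transfer_count (_ : (3 %| _)%nat = false) ?mulr0 //.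
  by apply/negbTE; lia.
transitivity (denom_combo (transfer_count^~ pempty) (N %/ 3 - 10)).
  apply: eq_bigr => j _; rewrite T_transfer_count (_ : (3 %| _)%nat = true); last by lia.
  by congr (_ * transfer_count _ _); have := ltn_ord j; lia.
by apply: denom_combo_transfer_count pempty_in_profiles _; lia.
Qed.

Theorem mainTheorem17 :
  forall N : nat,
    \sum_(i < N.+1) denom17`_i * ((T (N - i))%:Z) = numer17`_N.
Proof.
move=> N; rewrite denom17E numer17E coef_sum_scale_Xn.
rewrite (sum_coef_mul_sparse _ _ (fun j => denom_coef`_j) (fun j => 30 - 6 * j)%nat
  (fun m => (T m)%:Z)).
have [N33|N33] := ltnP N 33; first exact: initial_coefficients.
rewrite later_coefficients // big1 // => j _.
by rewrite (_ : (6 * j == N)%nat = false) ?mulr0 //; apply/negbTE; have := ltn_ord j; lia.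
Qed.
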